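(* For $n\ge 1$ let $\varphi_n:=\forall x\forall y\,\big(\bigwedge_{i<n}(p_i(x)\leftrightarrow p_i(y))\to(p_n(x)\leftrightarrow p_n(y))\big)$, a formula of $\mathcal{FO}^m_{\mathrm{RCC8}}$. Then every $\mathcal{L}_{\mathrm{RCC8}}$-formula $\psi_n$ that is equivalent to $\varphi_n$ on the class $\mathcal{RS}$ of all region structures (i.e., for every region model $\mathfrak M$ based on a structure in $\mathcal{RS}$ and every region $s$, $\mathfrak M,s\models\psi_n$ iff $\mathfrak M\models\varphi_n$) has length $2^{\Omega(n)}$.
   Context: A (general) region structure is a relational structure $\langle W,\mathrm{dc},\mathrm{ec},\mathrm{po},\mathrm{eq},\mathrm{tpp},\mathrm{ntpp},\mathrm{tppi},\mathrm{ntppi}\rangle$ with $W\ne\emptyset$, whose eight binary relations are mutually disjoint and jointly exhaustive on $W\times W$, with $\mathrm{eq}$ the identity, $\mathrm{dc},\mathrm{ec},\mathrm{po}$ symmetric, $\mathrm{tppi},\mathrm{ntppi}$ the inverses of $\mathrm{tpp},\mathrm{ntpp}$, and satisfying the standard RCC8 composition table; $\mathcal{RS}$ is the class of all of them. $\mathcal{L}_{\mathrm{RCC8}}$ is the modal language with propositional variables $p_1,p_2,\dots$ (and $p_0$), $\neg,\wedge$, and box operators $[r]$ for each of the eight relations, interpreted in region models (region structure plus valuation $p_i^{\mathfrak M}\subseteq W$) by $\mathfrak M,s\models[r]\varphi$ iff $\mathfrak M,t\models\varphi$ for all $t$ with $(s,t)\in r$. $\mathcal{FO}^m_{\mathrm{RCC8}}$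 is first-order logic with equality, eight binary predicates for the relations and unary predicates $p_0,p_1,\dots$, interpreted in region models in the obvious way. *)

From Stdlib Require Import Arith List.

Inductive rcc8 : Type := DC | EC | PO | EQ | TPP | NTPP | TPPi | NTPPi.

(* The standard RCC8 composition table:
   rcc8_comp r1 r2 r3 = true  iff  r3 is listed in the entry r1 ; r2,
   i.e. x r1 y /\ y r2 z may give x r3 z. *)
Definition rcc8_comp (r1 r2 r3 : rcc8) : bool :=
  let all := true in
  let inl (l : list rcc8) := existsb (fun r => match r, r3 with
      | DC,DC | EC,EC | PO,PO | EQ,EQ | TPP,TPP | NTPP,NTPP
      | TPPi,TPPi | NTPPi,NTPPi => true | _,_ => false end) l in
  match r1, r2 with
  | EQ, _ => inl (r2 :: nil)
  | _, EQ => inl (r1 :: nil)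
  | DC, DC => all
  | DC, EC | DC, PO | DC, TPP | DC, NTPP => inl (DC::EC::PO::TPP::NTPP::nil)
  | DC, TPPi | DC, NTPPi => inl (DC::nil)
  | EC, DC => inl (DC::EC::PO::TPPi::NTPPi::nil)
  | EC, EC => inl (DC::EC::PO::TPP::TPPi::EQ::nil)
  | EC, PO => inl (DC::EC::PO::TPP::NTPP::nil)
  | EC, TPP => inl (EC::PO::TPP::NTPP::nil)
  | EC, NTPP => inl (PO::TPP::NTPP::nil)
  | EC, TPPi => inl (DC::EC::nil)
  | EC, NTPPi => inl (DC::nil)
  | PO, DC | PO, EC => inl (DC::EC::PO::TPPi::NTPPi::nil)
  | PO, PO => all
  | PO, TPP | PO, NTPP => inl (PO::TPP::NTPP::nil)
  | PO, TPPi | PO, NTPPi => inl (DC::EC::PO::TPPi::NTPPi::nil)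
  | TPP, DC => inl (DC::nil)
  | TPP, EC => inl (DC::EC::nil)
  | TPP, PO => inl (DC::EC::PO::TPP::NTPP::nil)
  | TPP, TPP => inl (TPP::NTPP::nil)
  | TPP, NTPP => inl (NTPP::nil)
  | TPP, TPPi => inl (DC::EC::PO::TPP::TPPi::EQ::nil)
  | TPP, NTPPi => inl (DC::EC::PO::TPPi::NTPPi::nil)
  | NTPP, DC | NTPP, EC => inl (DC::nil)
  | NTPP, PO => inl (DC::EC::PO::TPP::NTPP::nil)
  | NTPP, TPP | NTPP, NTPP => inl (NTPP::nil)
  | NTPP, TPPi => inl (DC::EC::PO::TPP::NTPP::nil)
  | NTPP, NTPPi => all
  | TPPi, DC => inl (DC::EC::PO::TPPi::NTPPi::nil)
  | TPPi, EC => inl (EC::PO::TPPi::NTPPi::nil)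
  | TPPi, PO => inl (PO::TPPi::NTPPi::nil)
  | TPPi, TPP => inl (PO::TPP::TPPi::EQ::nil)
  | TPPi, NTPP => inl (PO::TPP::NTPP::nil)
  | TPPi, TPPi => inl (TPPi::NTPPi::nil)
  | TPPi, NTPPi => inl (NTPPi::nil)
  | NTPPi, DC => inl (DC::EC::PO::TPPi::NTPPi::nil)
  | NTPPi, EC | NTPPi, PO | NTPPi, TPP => inl (PO::TPPi::NTPPi::nil)
  | NTPPi, NTPP => inl (PO::TPP::NTPP::TPPi::NTPPi::EQ::nil)
  | NTPPi, TPPi | NTPPi, NTPPi => inl (NTPPi::nil)
  end.

Record region_structure (W : Type) : Type := {
  rel : rcc8 -> W -> W -> Prop;
  rs_nonempty : inhabited W;
  rs_exh : forall x y, exists r, rel r x y;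
  rs_disj : forall r1 r2 x y, rel r1 x y -> rel r2 x y -> r1 = r2;
  rs_eq : forall x y, rel EQ x y <-> x = y;
  rs_dc_sym : forall x y, rel DC x y -> rel DC y x;
  rs_ec_sym : forall x y, rel EC x y -> rel EC y x;
  rs_po_sym : forall x y, rel PO x y -> rel PO y x;
  rs_tppi : forall x y, rel TPPi x y <-> rel TPP y x;
  rs_ntppi : forall x y, rel NTPPi x y <-> rel NTPP y x;
  rs_comp : forall r1 r2 r3 x y z,
      rel r1 x y -> rel r2 y z -> rel r3 x z -> rcc8_comp r1 r2 r3 = true
}.
Arguments rel {W} _ _ _ _.

Inductive mform : Type :=
  | MVar : nat -> mform
  | MNeg : mform -> mform
  | MAnd : mform -> mform -> mform
  | MBox : rcc8 -> mform -> mform.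

Fixpoint mlength (f : mform) : nat :=
  match f with
  | MVar _ => 1
  | MNeg g => S (mlength g)
  | MAnd g h => S (mlength g + mlength h)
  | MBox _ g => S (mlength g)
  end.

Fixpoint msat {W : Type} (S : region_structure W) (V : nat -> W -> Prop)
    (s : W) (f : mform) : Prop :=
  match f with
  | MVar i => V i s
  | MNeg g => ~ msat S V s g
  | MAnd g h => msat S V s g /\ msat S V s h
  | MBox r g => forall t, rel S r s t -> msat S V t g
  end.

Definition phi_holds {W : Type} (V : nat -> W -> Prop) (n : nat) : Prop :=
  forall x y : W, (forall i, i < n -> (V i x <-> V i y)) -> (V n x <-> V n y).

Definition equiv_phi_RS (psi : mform) (n : nat) : Prop :=
  forall (W : Type) (S : region_structure W) (V : nat -> W -> Prop) (s : W),
    msat S V s psi <-> phi_holds V n.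

(* Already difference models, where DC is inequality, EQ is equality and all
   other relations are empty, force the bound.  A point carries a valuation
   t of p_0, ..., p_(n-1) and a bit for p_n, and every point is doubled, so
   that [DC] sees all points: the truth of psi at a point is then a function
   of its valuation and of the global truth values of the subformulas [DC]c
   of psi.  For a Boolean function g on {0,1}^n, phi_n holds in the model of
   the graph of g and fails once the point (t, ~~ g t) is added; psi must
   notice this at (t, g t), so some [DC]c of psi that is true on the graph
   has c false at (t, ~~ g t).  Hence g is decoded from the truth vector of
   the [DC]-subformulas of psi on its graph: the 2^(2^n) functions g inject
   into at most 2^|psi| vectors, and |psi| >= 2^n. *)

From Stdlib Require Import Arith Classical.
From HB Require Import structures.
From mathcomp Require all_boot.

Module DifferenceModels.
Import all_boot.
Set Implicit Arguments. Unset Strict Implicit. Unset Printing Implicit Defensive.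

Definition mform_eq_dec : comparable mform.
Proof. by rewrite /comparable /decidable; do 2 decide equality. Defined.

HB.instance Definition _ := comparableMixin mform_eq_dec.

Section DifferenceStructure.
Variable W : Type.

Definition diff_rel (r : rcc8) (x y : W) : Prop :=
  (r = EQ /\ x = y) \/ (r = DC /\ x <> y).

Definition difference_structure (w0 : W) : region_structure W.
Proof.
refine (@Build_region_structure W diff_rel (inhabits w0) _ _ _ _ _ _ _ _ _).
- by move=> x y; case: (classic (x = y)) => xy; [exists EQ; left | exists DC; right].
- by move=> r1 r2 x y [[-> xy]|[-> xy]] [[-> xy']|[-> xy']].
- by move=> x y; split=> [[[_ ->]|[]] | ->]; [| |left].
- by move=> x y [[]|[_ xy]] //; right; split=> // yx; apply: xy.
- by move=> x y [[]|[]].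
- by move=> x y [[]|[]].
- by move=> x y; split=> [[[]|[]]|[[]|[]]].
- by move=> x y; split=> [[[]|[]]|[[]|[]]].
- by move=> r1 r2 r3 x y z [[-> <-]|[-> xy]] [[-> <-]|[-> yz]] [[-> xz]|[-> xz]].
Defined.

End DifferenceStructure.

Fixpoint boxes (f : mform) : seq mform :=
  match f with
  | MVar _ => [::]
  | MNeg g => boxes g
  | MAnd g h => boxes g ++ boxes h
  | MBox DC g => g :: boxes g
  | MBox _ g => boxes g
  end.

Lemma size_boxes f : size (boxes f) <= mlength f.
Proof.
elim: f => [i|g IH|g IHg h IHh|[] g IH] //=; try exact: leqW.
by rewrite size_cat; apply/leqW/leq_add.
Qed.

Lemma boxes_closed f c : c \in boxes f -> {subset boxes c <= boxes f}.
Proof.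
elim: f => [i|g IH|g IHg h IHh|[] g IH] //=; try exact: IH.
- by rewrite mem_cat => /orP[/IHg|/IHh] sub d /sub; rewrite mem_cat => ->; rewrite ?orbT.
- rewrite inE => /orP[/eqP-> | /IH sub] d d_in; rewrite inE.
  + by rewrite d_in orbT.
  + by rewrite sub ?orbT.
Qed.

Section GlobalSemantics.
Variables (X : finType) (lab : nat -> X -> bool).

(* Truth in the doubled difference model over the points in P; see [msat_twin]. *)
Fixpoint gsat (P : pred X) (x : X) (f : mform) : bool :=
  match f with
  | MVar i => lab i x
  | MNeg g => ~~ gsat P x g
  | MAnd g h => gsat P x g && gsat P x h
  | MBox DC g => [forall y in P, gsat P y g]
  | MBox EQ g => gsat P x g
  | MBox _ _ => true
  end.

Definition boxval (P : pred X) (c : mform) : bool := [forall y in P, gsat P y c].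

Lemma gsat_agree P Q x f :
  {in boxes f, boxval P =1 boxval Q} -> gsat P x f = gsat Q x f.
Proof.
elim: f x => [i|g IH|g IHg h IHh|[] g IH] x //= PQ.
- by rewrite IH.
- by rewrite IHg ?IHh // => c c_in; apply: PQ; rewrite mem_cat c_in ?orbT.
- by apply: PQ; rewrite inE eqxx.
- exact: IH.
Qed.

Lemma forall_predU1 (x0 : X) (P F : pred X) :
  [forall y in predU1 x0 P, F y] = F x0 && [forall y in P, F y].
Proof.
apply/forall_inP/andP => [all_F | [F0 /forall_inP all_F] y].
- split; first by apply: all_F; rewrite !inE eqxx.
  by apply/forall_inP => y Py; apply: all_F; apply/predU1P; right.
- by move=> /predU1P[-> // | /all_F].
Qed.

Lemma gsat_predU1 P x0 x f :
  all [pred c | boxval P c ==> gsat P x0 c] (boxes f) ->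
  gsat (predU1 x0 P) x f = gsat P x f.
Proof.
elim: f x => [i|g IH|g IHg h IHh|[] g IH] x //=.
- by move/IH->.
- by rewrite all_cat => /andP[/IHg-> /IHh->].
- case/andP=> /implyP box_g /IH gE.
  rewrite forall_predU1 gE -/(boxval P g).
  have -> : [forall y in P, gsat (predU1 x0 P) y g] = boxval P g.
    by apply: eq_forallb => y; rewrite gE.
  exact: andb_idl.
- by move/IH.
Qed.

Definition twin_world (P : pred X) := ({x : X | P x} * bool)%type.

Definition twin_val {P : pred X} (i : nat) (w : twin_world P) : Prop := lab i (val w.1).

Lemma msat_twin P (w0 w : twin_world P) f :
  msat (difference_structure w0) twin_val w f <-> gsat P (val w.1) f.
Proof.
elim: f w => [i|g IH|g IHg h IHh|r g IH] w /=.
- by [].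
- by rewrite IH; split=> /negP.
- by rewrite IHg IHh; split=> /andP.
- case: r => /=; try by split=> // _ t [[]|[]].
  + split=> [all_g | /forallP all_g [[y Py] b] [[]//|[_ _]]].
    * apply/forallP=> y; apply/implyP=> Py.
      apply/(IH (exist _ y Py, ~~ w.2))/all_g; right; split=> //.
      by case: w {all_g} => ? [] [].
    * by apply/IH/(implyP (all_g y)).
  + split=> [all_g | g_w t [[_ <-]|[]] //]; last exact/IH.
    by apply/IH/all_g; left.
Qed.

End GlobalSemantics.

Section GraphModels.
Variable n : nat.

Definition cube := {ffun 'I_n -> bool}.
Definition point := (cube * bool)%type.

(* Truth value of p_i; the variables p_i with i > n are false everywhere. *)
Definition coord (i : nat) (u : point) : bool :=
  if (insub i : option 'I_n) is Some j then u.1 j else (i == n) && u.2.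

Lemma coord_ord (j : 'I_n) u : coord j u = u.1 j.
Proof. by rewrite /coord valK. Qed.

Lemma coord_n u : coord n u = u.2.
Proof. by rewrite /coord insubF ?ltnn ?eqxx. Qed.

Definition graph (g : {ffun cube -> bool}) : pred point := [pred u | u.2 == g u.1].

Lemma phi_graph g : phi_holds (twin_val coord (P := graph g)) n.
Proof.
move=> [[u u_in] b] [[u' u'_in] b'] same.
have u1_u'1 : u.1 = u'.1.
  apply/ffunP => j; move: (same j (elimT ltP (ltn_ord j))).
  by rewrite /twin_val /= !coord_ord => -[to from]; apply/idP/idP.
by rewrite /twin_val /= !coord_n (eqP u_in) (eqP u'_in) u1_u'1.
Qed.

Definition perturb (g : {ffun cube -> bool}) (t : cube) : pred point :=
  predU1 (t, ~~ g t) (graph g).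

Lemma graph_mem g t : graph g (t, g t).
Proof. by rewrite /graph /= eqxx. Qed.

Lemma perturb_mem g t : perturb g t (t, g t).
Proof. by rewrite /perturb /= graph_mem orbT. Qed.

Lemma not_phi_perturb g t : ~ phi_holds (twin_val coord (P := perturb g t)) n.
Proof.
have in_extra : perturb g t (t, ~~ g t) by rewrite /perturb /= eqxx.
move=> /(_ (exist (perturb g t) _ (perturb_mem g t), true)
           (exist (perturb g t) _ in_extra, true)).
rewrite /twin_val /= !coord_n.
have same_below : forall i, (i < n)%coq_nat -> coord i (t, g t) <-> coord i (t, ~~ g t).
  by move=> i /ltP i_lt; rewrite -[i]/(nat_of_ord (Ordinal i_lt)) !coord_ord.
by move=> /(_ same_below) /=; case: (g t) => -[to from];
  [have := to isT | have := from isT].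
Qed.

Lemma gsat_separates g t psi : equiv_phi_RS psi n ->
  gsat coord (graph g) (t, g t) psi /\ ~~ gsat coord (perturb g t) (t, g t) psi.
Proof.
move=> E.
pose w : twin_world (graph g) := (exist (graph g) _ (graph_mem g t), true).
pose w' : twin_world (perturb g t) := (exist (perturb g t) _ (perturb_mem g t), true).
split.
- by apply/(msat_twin coord w w)/E/phi_graph.
- by apply/negP => /(msat_twin coord w' w')/E; apply: not_phi_perturb.
Qed.

Definition witness (P : pred point) (t : cube) (c : mform) : bool :=
  [&& boxval coord P c, gsat coord P (t, true) c & ~~ gsat coord P (t, false) c].

Lemma graph_decode (g : {ffun cube -> bool}) t psi : equiv_phi_RS psi n ->
  g t = has (witness (graph g) t) (boxes psi).
Proof.
move=> E; case g_t : (g t); apply/esym.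
- have [sat_g unsat_pert] := gsat_separates g t E.
  rewrite /perturb g_t in sat_g unsat_pert.
  have : ~~ all [pred c | boxval coord (graph g) c ==> gsat coord (graph g) (t, false) c]
              (boxes psi).
    by apply: contra unsat_pert => /gsat_predU1 ->.
  case/allPn => c c_in; rewrite /= negb_imply => /andP[box_c unsat_c].
  apply/hasP; exists c => //; rewrite /witness box_c unsat_c andbT /=.
  by apply: (forall_inP box_c); rewrite inE /= g_t.
- apply/hasPn => c _; apply/and3P => -[box_c _ /negP]; apply.
  by apply: (forall_inP box_c); rewrite inE /= g_t.
Qed.

Definition box_signature psi (g : {ffun cube -> bool}) :
  (size (boxes psi)).-tuple bool :=
  map_tuple (boxval coord (graph g)) (in_tuple (boxes psi)).

Lemma box_signature_inj psi : equiv_phi_RS psi n -> injective (box_signature psi).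
Proof.
move=> E g g' /(congr1 val) /eq_in_map same_box; apply/ffunP => t.
rewrite (graph_decode g t E) (graph_decode g' t E).
apply: eq_in_has => c c_in; rewrite /witness same_box //.
have sub := boxes_closed c_in.
by rewrite !(@gsat_agree _ _ (graph g) (graph g')) // => d /sub; apply: same_box.
Qed.

Lemma mlength_ge_pow2 psi : equiv_phi_RS psi n -> 2 ^ n <= mlength psi.
Proof.
move=> /box_signature_inj/leq_card.
rewrite card_tuple !card_ffun !card_bool card_ord leq_exp2l //.
by move/leq_trans; apply; apply: size_boxes.
Qed.

End GraphModels.

Lemma expn_pow m k : m ^ k = Nat.pow m k.
Proof. by elim: k => // k IH; rewrite expnS IH. Qed.

Lemma mlength_lower_bound n psi :
  equiv_phi_RS psi n -> (Nat.pow 2 n <= mlength psi)%coq_nat.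
Proof. by move=> /mlength_ge_pow2; rewrite expn_pow => /leP. Qed.

End DifferenceModels.

Theorem theorem3p2 :
  exists k N : nat, 1 <= k /\
    forall n : nat, 1 <= n -> N <= n ->
      forall psi : mform, equiv_phi_RS psi n ->
        2 ^ (n / k) <= mlength psi.
Proof.
exists 1, 0; split; [auto|].
intros n _ _ psi E; rewrite Nat.div_1_r; exact (DifferenceModels.mlength_lower_bound E).
Qed.
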